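(* Let $m \geq 0$, $n \geq 1$ be integers and let $c = (c^t; c^b)$ be a sorted deterministically recurrent configuration on $K_{m,n}^0$. Run the following algorithm: let $T$ be the stack $(c^t_1, \ldots, c^t_m, n-1)$ and $B$ the stack $(c^b_1, \ldots, c^b_n)$, each with head its first (smallest) element, and let $w$ be the empty word. While both $T$ and $B$ are non-empty: (a) while $\mathrm{head}(T) > 0$ and $\mathrm{head}(B) > 0$, append $U$ to $w$ and decrease every entry of $T$ and of $B$ by $1$; (b) then, if $0 = \mathrm{head}(T) < \mathrm{head}(B)$, remove the head of $T$, append $H^E$ to $w$, and decrease every entry of $B$ by $1$; else if $0 = \mathrm{head}(B) < \mathrm{head}(T)$, remove the head of $B$, append $H^N$ to $w$, and decrease every entry of $T$ by $1$; else (both heads equal $0$) remove the heads of both $T$ and $B$ and append $D$ to $w$. After the loop, delete the final step (a $D$) of $w$ and output the resulting word $w(c)$. Then $w(c) = \Xi(\Phi(c))$; that is, $c \mapsto w(c)$ is the bijection $\Xi \circ \Phi$ from sorted deterministically recurrent configurations on $K_{m,n}^0$ to $\mathrm{Motz}_{m,n-1}$. Moreover, $\mathrm{level}(c) = \mathrm{Area}(w(c))$.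
   Context: $K_{m,n}^0$ is the complete bipartite graph with ''top'' vertices $v^t_0, \ldots, v^t_m$ and ''bottom'' vertices $v^b_1, \ldots, v^b_n$, with an edge between every top and every bottom vertex; $v^t_0$ is the sink. A configuration is a vector $c = (c^t_1, \ldots, c^t_m; c^b_1, \ldots, c^b_n)$ of non-negative integers; it is sorted if $c^t$, $c^b$ are weakly increasing, stable if $c^t_i < n$ and $c^b_j < m+1$ for all $i,j$. Abelian sandpile model (ASM): an unstable non-sink vertex topples by sending one grain to each neighbour (bottom vertices also to the sink); grains sent to the sink disappear. In the Markov chain on stable configurations which adds a grain to a uniformly random non-sink vertex and stabilises by the ASM, a stable configuration is deterministically recurrent if it is a recurrent state. The level is $\mathrm{level}(c) := \sum_i c^t_i + \sum_j c^b_j - mn$. Labelled Motzkin paths: words in steps $U=(1,1)$, $D=(1,-1)$ and horizontal steps $H^N, H^E$ (both $=(1,0)$), starting and ending at height $0$ and never going below the $x$-axis; $\mathrm{Area}(w)$ is the area between the path and the $x$-axis. $\mathrm{Motz}_{m,n-1}$ is the set of such paths with $m+n-1$ steps, exactly $m$ of which are $U$ or $H^E$. A parallelogram polyomino in the box $[0,m+1]\times[0,n]$ is the set of unit cells between two lattice paths $\mathcal{U}$ (upper) and $\mathcal{L}$ (lower) from $(0,0)$ to $(m+1,n)$ with steps $N=(0,1)$, $E=(1,0)$, meeting only at their endpoints; necessarily $\mathcal{U} = (N, u_1, \ldots, u_{m+n-1}, E)$ and $\mathcal{L} = (E, \ell_1, \ldots, \ell_{m+n-1}, N)$. The map $\Xi$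 sends such a polyomino to $w_1 \cdots w_{m+n-1}$ with $w_i = U$ if $(u_i,\ell_i) = (N,E)$, $w_i = H^N$ if $(u_i,\ell_i)=(N,N)$, $w_i = H^E$ if $(u_i,\ell_i) = (E,E)$, $w_i = D$ if $(u_i,\ell_i) = (E,N)$; it is known to be a bijection onto $\mathrm{Motz}_{m,n-1}$. The Dukes–Le Borgne map $\Phi$: for a sorted stable $c$, $\mathcal{U}(c^t)$ is the path from $(0,0)$ to $(m+1,n)$ whose $E$ steps occur at heights $1+c^t_1, \ldots, 1+c^t_m, n$, and $\mathcal{L}(c^b)$ the path from $(0,0)$ to $(m+1,n)$ whose $N$ steps occur at $x$-coordinates $1+c^b_1, \ldots, 1+c^b_n$; $\Phi(c)$ is the polyomino between them. It is known that $\Phi$ is a bijection from sorted deterministically recurrent configurations on $K_{m,n}^0$ to parallelogram polyominoes in $[0,m+1]\times[0,n]$. *)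

From mathcomp Require Import all_boot all_order all_algebra.
Set Implicit Arguments.
Unset Strict Implicit.
Unset Printing Implicit Defensive.
Import Order.TTheory GRing.Theory Num.Theory.

(* Configurations on K_{m,n}^0: c = (c^t, c^b), c^t of size m          *)
(* (top non-sink vertices v^t_1..v^t_m), c^b of size n (bottom).       *)
(* Indices are 0-based: entry i of c^t is c^t_{i+1}.                   *)
Definition config := (seq nat * seq nat)%type.

Definition is_config (m n : nat) (c : config) : bool :=
  (size c.1 == m) && (size c.2 == n).

Definition sorted_config (c : config) : bool :=
  sorted leq c.1 && sorted leq c.2.

(* top vertices have degree n, bottom vertices degree m+1 *)
Definition stable_config (m n : nat) (c : config) : bool :=
  all (fun x => x < n) c.1 && all (fun x => x < m.+1) c.2.

(* non-sink vertices *)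
Inductive vertex := VTop of nat | VBot of nat.

Definition valid_vertex (m n : nat) (v : vertex) : bool :=
  match v with VTop i => i < m | VBot j => j < n end.

Definition unstable_at (m n : nat) (c : config) (v : vertex) : bool :=
  match v with
  | VTop i => n <= nth 0 c.1 i
  | VBot j => m.+1 <= nth 0 c.2 j
  end.

Definition topple (m n : nat) (c : config) (v : vertex) : config :=
  match v with
  | VTop i => (set_nth 0 c.1 i (nth 0 c.1 i - n), map S c.2)
  | VBot j => (map S c.1, set_nth 0 c.2 j (nth 0 c.2 j - m.+1))
    (* the grain sent to the sink v^t_0 disappears *)
  end.

Inductive topple_reach (m n : nat) : config -> config -> Prop :=
  | tr_refl c : topple_reach m n c c
  | tr_step c v d : valid_vertex m n v -> unstable_at m n c v ->
      topple_reach m n (topple m n c v) d -> topple_reach m n c d.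

Definition stabilises_to (m n : nat) (c d : config) : Prop :=
  topple_reach m n c d /\ stable_config m n d.

Definition add_grain (c : config) (v : vertex) : config :=
  match v with
  | VTop i => (set_nth 0 c.1 i (nth 0 c.1 i).+1, c.2)
  | VBot j => (c.1, set_nth 0 c.2 j (nth 0 c.2 j).+1)
  end.

(* one transition of positive probability of the Markov chain on stable
   configurations: add a grain at some non-sink vertex and stabilise *)
Definition mc_step (m n : nat) (c d : config) : Prop :=
  exists v, valid_vertex m n v /\ stabilises_to m n (add_grain c v) d.

Inductive mc_reach (m n : nat) : config -> config -> Prop :=
  | mr_refl c : mc_reach m n c c
  | mr_step c c' d : mc_step m n c c' -> mc_reach m n c' d -> mc_reach m n c d.

(* recurrent state of the (finite) Markov chain: every state reachable
   from c can reach c back *)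
Definition det_recurrent (m n : nat) (c : config) : Prop :=
  is_config m n c /\ stable_config m n c /\
  forall d, mc_reach m n c d -> mc_reach m n d c.

Definition sorted_recurrent (m n : nat) (c : config) : Prop :=
  sorted_config c /\ det_recurrent m n c.

Definition level (m n : nat) (c : config) : int :=
  (sumn c.1 + sumn c.2)%:Z - (m * n)%:Z.

Inductive mstep := U | D | HN | HE.

Definition next_height (h : nat) (s : mstep) : nat :=
  match s with U => h.+1 | D => h.-1 | _ => h end.

Fixpoint motz_ok (h : nat) (w : seq mstep) : bool :=
  match w with
  | [::] => h == 0
  | U :: w' => motz_ok h.+1 w'
  | D :: w' => (0 < h) && motz_ok h.-1 w'
  | _ :: w' => motz_ok h w'
  end.

Definition is_UorHE (s : mstep) : bool :=
  match s with U | HE => true | _ => false end.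

(* Motz_{m,n-1}: m+n-1 steps, exactly m of which are U or H^E *)
Definition in_Motz (m n : nat) (w : seq mstep) : bool :=
  [&& size w == m + n - 1, count is_UorHE w == m & motz_ok 0 w].

(* twice the area under the path started at height h: the step from
   height h to h' contributes the trapezoid (h + h')/2 *)
Fixpoint area2 (h : nat) (w : seq mstep) : nat :=
  match w with
  | [::] => 0
  | s :: w' => (h + next_height h s) + area2 (next_height h s) w'
  end.

Definition Area (w : seq mstep) : rat := (area2 0 w)%:R / 2%:R.

Inductive lstep := N | E.

(* path from height cur whose successive E steps occur at heights hs *)
Fixpoint upper_path (cur : nat) (hs : seq nat) : seq lstep :=
  match hs with
  | [::] => [::]
  | h :: hs' => nseq (h - cur) N ++ E :: upper_path h hs'
  end.

(* path from x-coordinate cur whose successive N steps occur at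
   x-coordinates xs, ending at x-coordinate xend *)
Fixpoint lower_path (xend cur : nat) (xs : seq nat) : seq lstep :=
  match xs with
  | [::] => nseq (xend - cur) E
  | x :: xs' => nseq (x - cur) E ++ N :: lower_path xend x xs'
  end.

(* a polyomino is given by its (upper, lower) boundary paths *)
Definition polyomino := (seq lstep * seq lstep)%type.

Definition upper_of (n : nat) (ct : seq nat) : seq lstep :=
  upper_path 0 (map S ct ++ [:: n]).

Definition lower_of (m : nat) (cb : seq nat) : seq lstep :=
  lower_path m.+1 0 (map S cb).

Definition Phi (m n : nat) (c : config) : polyomino :=
  (upper_of n c.1, lower_of m c.2).

(* u_1 .. u_{m+n-1}: drop the first and last steps *)
Definition inner_steps (s : seq lstep) : seq lstep :=
  take (size s).-2 (behead s).

Definition xi_letter (p : lstep * lstep) : mstep :=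
  match p with
  | (N, E) => U
  | (N, N) => HN
  | (E, E) => HE
  | (E, N) => D
  end.

Definition Xi (P : polyomino) : seq mstep :=
  map xi_letter (zip (inner_steps P.1) (inner_steps P.2)).

(* step (a): while head T > 0 and head B > 0, append U and decrement
   every entry of T and B (fuel is any sufficiently large bound) *)
Fixpoint loop_a (fuel : nat) (T B : seq nat) (w : seq mstep)
  : seq nat * seq nat * seq mstep :=
  match fuel with
  | 0 => (T, B, w)
  | f.+1 =>
    match T, B with
    | t :: _, b :: _ =>
      if (0 < t) && (0 < b)
      then loop_a f (map predn T) (map predn B) (rcons w U)
      else (T, B, w)
    | _, _ => (T, B, w)
    end
  end.

Definition step_b (T B : seq nat) (w : seq mstep)
  : seq nat * seq nat * seq mstep :=
  match T, B with
  | t :: T', b :: B' =>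
    if (t == 0) && (0 < b) then (T', map predn B, rcons w HE)
    else if (b == 0) && (0 < t) then (map predn T, B', rcons w HN)
    else (T', B', rcons w D)
  | _, _ => (T, B, w)
  end.

(* the outer while loop: each iteration removes at least one entry, so
   size T + size B + 1 iterations suffice; loop (a) performs at most
   sumn T iterations *)
Fixpoint outer_loop (fuel : nat) (T B : seq nat) (w : seq mstep)
  : seq mstep :=
  match fuel with
  | 0 => w
  | f.+1 =>
    if (T != [::]) && (B != [::]) then
      let: (T1, B1, w1) := loop_a (sumn T).+1 T B w in
      let: (T2, B2, w2) := step_b T1 B1 w1 in
      outer_loop f T2 B2 w2
    else w
  end.

Definition run_algorithm (n : nat) (c : config) : seq mstep :=
  let T := rcons c.1 n.-1 in
  let B := c.2 in
  outer_loop (size T + size B).+1 T B [::].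

Definition w_of (n : nat) (c : config) : seq mstep :=
  let w := run_algorithm n c in take (size w).-1 w.

From mathcomp Require Import all_boot all_order all_algebra.
From mathcomp Require Import zify.
Set Implicit Arguments. Unset Strict Implicit. Unset Printing Implicit Defensive.
Import GRing.Theory.

(* A sorted stable configuration c is recurrent iff it is separated: for all
   1 <= P <= m and 1 <= Q <= n, c^t_P >= Q or c^b_Q >= P.  If this fails, the first P top
   and the first Q bottom vertices form a forbidden subconfiguration; such a set is only
   ever inherited backwards along topplings and grain additions, and the maximal stable
   configuration, reachable from every state, contains none.  Conversely, Dhar's burning
   algorithm and confluence lead from the maximal configuration back to c.
   The stack algorithm writes down, one letter at a time, the word that Xi reads off the
   two boundary paths of Phi(c).  Reading the stacks back off a word inverts it; along this
   inversion, separation with offset h is exactly the Motzkin condition from height h, and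
   the sums of the stack entries account for the area. *)

Lemma nth_mapS (s : seq nat) i :
  nth 0 (map S s) i = if i < size s then (nth 0 s i).+1 else 0.
Proof. by case: ltnP => hi; [rewrite (nth_map 0) | rewrite nth_default ?size_map]. Qed.

Lemma nth_mapS_ge (s : seq nat) i : nth 0 s i <= nth 0 (map S s) i.
Proof. by rewrite nth_mapS; case: ifP => // /negbT; rewrite -leqNgt => /(nth_default 0) ->. Qed.

Lemma sumn_mapS (s : seq nat) : sumn (map S s) = sumn s + size s.
Proof. by elim: s => //= x s ->; rewrite addnS addSn addnA. Qed.

Lemma sumn_set_nthD (s : seq nat) i y : i < size s ->
  sumn (set_nth 0 s i y) + nth 0 s i = sumn s + y.
Proof. by elim: s i => [|x s IH] [|i] //= hi; [lia | have := IH i hi; lia]. Qed.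

Lemma count_set_nthD (a : pred nat) (s : seq nat) i y : i < size s ->
  count a (set_nth 0 s i y) + a (nth 0 s i) = count a s + a y.
Proof. by elim: s i => [|x s IH] [|i] //= hi; [lia | have := IH i hi; lia]. Qed.

Lemma sumn_le_nth (s1 s2 : seq nat) : size s1 = size s2 ->
  (forall i, nth 0 s1 i <= nth 0 s2 i) -> sumn s1 <= sumn s2.
Proof.
elim: s1 s2 => [|x s1 IH] [|y s2] //= [hs] le12.
by rewrite leq_add ?(le12 0) // IH // => i; apply: (le12 i.+1).
Qed.

Lemma mkseq_eq_in (f g : nat -> nat) k :
  (forall i, i < k -> f i = g i) -> mkseq f k = mkseq g k.
Proof. by move=> fg; apply/eq_in_map => i; rewrite mem_iota => /andP[_ /fg]. Qed.

Lemma set_nth_mkseq (f : nat -> nat) k i y : i < k ->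
  set_nth 0 (mkseq f k) i y = mkseq (fun j => if j == i then y else f j) k.
Proof.
move=> ik; apply: (@eq_from_nth _ 0) => [|j].
  by rewrite size_set_nth !size_mkseq; apply/maxn_idPr.
rewrite size_set_nth size_mkseq (maxn_idPr ik) => jk.
by rewrite nth_set_nth /= !nth_mkseq //; case: eqP.
Qed.

Lemma sorted_path0 (s : seq nat) : sorted leq s -> path leq 0 s.
Proof. by case: s. Qed.

Lemma sorted_count_lt (s : seq nat) P Q : sorted leq s -> 0 < P <= size s ->
  nth 0 s P.-1 < Q -> P <= count (fun x => x < Q) s.
Proof.
move=> ss /andP[P_gt0 Ps] sPQ; rewrite -(cat_take_drop P s) count_cat.
suff -> : count (fun x => x < Q) (take P s) = P by rewrite leq_addr.
have sizeP : size (take P s) = P by rewrite size_takel.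
apply/eqP; rewrite -[X in _ == X]sizeP -all_count; apply/(all_nthP 0) => k.
rewrite sizeP => kP; rewrite nth_take //; apply: leq_ltn_trans sPQ.
by apply: (sorted_leq_nth leq_trans leqnn) => //; rewrite /in_mem /=; lia.
Qed.

Lemma count_ltS (s : seq nat) Q :
  count (fun x => x < Q.+1) (map S s) = count (fun x => x < Q) s.
Proof. by rewrite count_map. Qed.

Lemma count_lt0 (s : seq nat) : count (fun x => x < 0) s = 0.
Proof. by elim: s. Qed.

Lemma count_lt_mono (s : seq nat) P Q : P <= Q ->
  count (fun x => x < P) s <= count (fun x => x < Q) s.
Proof. by move=> PQ; apply: sub_count => x /= /leq_trans; apply. Qed.

Lemma map_mkseq (f g : nat -> nat) k : map f (mkseq g k) = mkseq (f \o g) k.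
Proof. by rewrite /mkseq -map_comp. Qed.

Lemma last_mapS (s : seq nat) : s != [::] -> last 0 (map S s) = (last 0 s).+1.
Proof. by case: s => // x s _ /=; rewrite last_map. Qed.

Lemma last0_cons0 (s : seq nat) : last 0 (0 :: s) = last 0 s.
Proof. by case: s. Qed.

Lemma take_zip (A B : Type) k (s : seq A) (t : seq B) :
  take k (zip s t) = zip (take k s) (take k t).
Proof. by elim: s k t => [|x s IH] [|k] [|y t] //=; rewrite IH. Qed.

Lemma path_le_last x (s : seq nat) : path leq x s -> all (leq^~ (last x s)) (x :: s).
Proof.
elim: s x => [|y s IH] x /=; first by rewrite leqnn.
by case/andP=> xy /IH /= /andP[y_last ->]; rewrite y_last (leq_trans xy).
Qed.

Lemma sorted_le_last (s : seq nat) : sorted leq s -> all (leq^~ (last 0 s)) s.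
Proof. by case: s => //= x s /path_le_last. Qed.

Lemma sorted_head_le (s : seq nat) : sorted leq s -> all (leq (head 0 s)) s.
Proof. by case: s => //= x s /(order_path_min leq_trans) ->; rewrite leqnn. Qed.

Lemma sorted_rcons_le (s : seq nat) y : sorted leq s -> all (leq^~ y) s ->
  sorted leq (rcons s y).
Proof.
case: s => // x s sx /allP xs_y /=; rewrite rcons_path.
by apply/andP; split; [exact: sx | exact: xs_y (mem_last x s)].
Qed.

Lemma sorted_map_subn j (s : seq nat) : sorted leq s -> sorted leq (map (subn^~ j) s).
Proof. by apply: homo_sorted => x y; apply: leq_sub2r. Qed.

Lemma sorted_map_pred (s : seq nat) : sorted leq s -> sorted leq (map predn s).
Proof. by apply: homo_sorted => x y xy; rewrite -!subn1 leq_sub2r. Qed.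

Lemma map_addn_subn j (s : seq nat) : sorted leq s -> j <= head 0 s ->
  map (addn j) (map (subn^~ j) s) = s.
Proof.
move=> /sorted_head_le /allP s_ge js; rewrite -map_comp map_id_in // => x /s_ge hx /=.
by rewrite subnKC // (leq_trans js).
Qed.

Lemma map_S_pred (s : seq nat) : sorted leq s -> 0 < head 0 s -> map S (map predn s) = s.
Proof.
move=> /sorted_head_le /allP s_ge s0; rewrite -map_comp map_id_in // => x /s_ge hx /=.
exact: prednK (leq_trans s0 hx).
Qed.

(* With T = c^t ++ [n - 1], B = c^b and h = 0 this is the separation condition above;
   along a word, h is the current height of the Motzkin path. *)
Definition separated (T B : seq nat) (h : nat) := forall P Q,
  0 < P < size T -> 0 < Q <= size B ->
  Q <= nth 0 T P.-1 + h \/ P <= nth 0 B Q.-1 + h.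

(** * Toppling, stabilisation and recurrence *)

Section Sandpile.
Variables m n : nat.
Hypothesis n_gt0 : 0 < n.

Lemma is_configP c : reflect (size c.1 = m /\ size c.2 = n) (is_config m n c).
Proof. by apply: (iffP andP) => [[/eqP-> /eqP->] | [-> ->]]. Qed.

Lemma vertex_eq_dec (v w : vertex) : {v = w} + {v <> w}.
Proof. by decide equality; apply: PeanoNat.Nat.eq_dec. Qed.

Lemma topple_config c v : is_config m n c -> valid_vertex m n v ->
  is_config m n (topple m n c v).
Proof.
case: c => t b /is_configP[/= t_m b_n]; case: v => i /= hi; apply/is_configP.
  by rewrite /= size_map size_set_nth t_m b_n (maxn_idPr hi).
by rewrite /= size_map size_set_nth t_m b_n (maxn_idPr hi).
Qed.

Lemma add_grain_config c v : is_config m n c -> valid_vertex m n v ->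
  is_config m n (add_grain c v).
Proof.
case: c => t b /is_configP[/= t_m b_n]; case: v => i /= hi; apply/is_configP.
  by rewrite /= size_set_nth t_m b_n (maxn_idPr hi).
by rewrite /= size_set_nth t_m b_n (maxn_idPr hi).
Qed.

Lemma unstable_topple c v w : v <> w -> unstable_at m n c w ->
  unstable_at m n (topple m n c v) w.
Proof.
case: c => t b; case: v => i; case: w => j //= neq uj; rewrite ?nth_set_nth /=.
- by case: eqP => [ij|//]; case: neq; rewrite ij.
- exact: leq_trans uj (nth_mapS_ge _ _).
- exact: leq_trans uj (nth_mapS_ge _ _).
- by case: eqP => [ij|//]; case: neq; rewrite ij.
Qed.

Lemma unstable_add_grain c u v : unstable_at m n c v ->
  unstable_at m n (add_grain c u) v.
Proof.
by case: c => t b; case: u => i; case: v => j //= uj;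
  rewrite nth_set_nth /=; case: eqP => [<-|] //; apply: leqW.
Qed.

Lemma topple_comm c v w : is_config m n c -> valid_vertex m n v -> valid_vertex m n w ->
  unstable_at m n c v -> unstable_at m n c w ->
  topple m n (topple m n c v) w = topple m n (topple m n c w) v.
Proof.
case: c => t b /is_configP[/= t_m b_n]; case: v => i; case: w => j /= hi hj ui uj;
  congr (_, _); apply: (@eq_from_nth _ 0);
  rewrite ?(size_set_nth, size_map, t_m, b_n) //; try lia; move=> k hk;
  do 2 rewrite ?(nth_set_nth, nth_mapS, size_set_nth, size_map) /= ?t_m ?b_n;
  repeat (case: eqP => //=; intros; subst); repeat (case: ltnP => //=; intros); lia.
Qed.

Lemma topple_add_grain c u v : is_config m n c -> valid_vertex m n u ->
  valid_vertex m n v -> unstable_at m n c v ->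
  topple m n (add_grain c u) v = add_grain (topple m n c v) u.
Proof.
case: c => t b /is_configP[/= t_m b_n]; case: u => i; case: v => j /= hi hj uj;
  congr (_, _); apply: (@eq_from_nth _ 0);
  rewrite ?(size_set_nth, size_map, t_m, b_n) //; try lia; move=> k hk;
  do 2 rewrite ?(nth_set_nth, nth_mapS, size_set_nth, size_map) /= ?t_m ?b_n;
  repeat (case: eqP => //=; intros; subst); repeat (case: ltnP => //=; intros); lia.
Qed.

Lemma stable_unstableN c v : is_config m n c -> stable_config m n c ->
  valid_vertex m n v -> ~~ unstable_at m n c v.
Proof.
case: c => t b /is_configP[/= t_m b_n] /andP[/allP t_lt /allP b_lt].
by case: v => i /= hi; rewrite -ltnNge; [apply: t_lt | apply: b_lt]; rewrite mem_nth ?t_m ?b_n.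
Qed.

Lemma topple_reach_stable c d : is_config m n c -> stable_config m n c ->
  topple_reach m n c d -> d = c.
Proof.
move=> + + cd; case: cd => // {}c v {}d hv uv _ cc sc.
by move: (stable_unstableN cc sc hv); rewrite uv.
Qed.

Lemma topple_reach_config c d : topple_reach m n c d -> is_config m n c -> is_config m n d.
Proof. by elim=> // {}c v {}d hv _ _ IH cc; apply/IH/topple_config. Qed.

Lemma topple_reach_trans a b c :
  topple_reach m n a b -> topple_reach m n b c -> topple_reach m n a c.
Proof. by elim=> // {}a v {}b hv uv _ IH /IH; apply: tr_step. Qed.

Lemma stabilises_topple c s v : is_config m n c -> stabilises_to m n c s ->
  valid_vertex m n v -> unstable_at m n c v -> topple_reach m n (topple m n c v) s.
Proof.
move=> cc [cs]; elim: cs cc v => [{}c|{}c w d hw uw wd IH] cc v ss hv uv.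
  by move: (stable_unstableN cc ss hv); rewrite uv.
case: (vertex_eq_dec w v) => [<- //|wv].
have uvw : unstable_at m n (topple m n c w) v by apply: unstable_topple.
have := IH (topple_config cc hw) v ss hv uvw.
rewrite -topple_comm //; apply: tr_step => //.
by apply: unstable_topple => // vw; apply: wv.
Qed.

Lemma topple_reach_confluent c s a : is_config m n c -> stabilises_to m n c s ->
  topple_reach m n c a -> topple_reach m n a s.
Proof.
move=> cc cs ca; elim: ca cc cs => [? _ [] //|{}c v d hv uv _ IH cc cs].
apply: (IH (topple_config cc hv)); split; last exact: cs.2.
exact: stabilises_topple.
Qed.

(* Toppling a top vertex keeps the number of grains and moves n of them to the bottom;
   toppling a bottom vertex loses one grain to the sink. *)
Definition sand_weight (c : config) := m.+1 * (sumn c.1 + sumn c.2) + sumn c.1.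

Lemma topple_weight c v : is_config m n c -> valid_vertex m n v ->
  unstable_at m n c v -> sand_weight (topple m n c v) < sand_weight c.
Proof.
case: c => t b /is_configP[/= t_m b_n]; rewrite /sand_weight /=.
case: v => i /= hi ui; rewrite sumn_mapS.
  have := sumn_set_nthD (nth 0 t i - n) (_ : i < size t); nia.
have := sumn_set_nthD (nth 0 b i - m.+1) (_ : i < size b); nia.
Qed.

Lemma unstable_exists c : is_config m n c -> ~~ stable_config m n c ->
  exists2 v, valid_vertex m n v & unstable_at m n c v.
Proof.
case: c => t b /is_configP[/= t_m b_n].
rewrite /stable_config negb_and -!has_predC => /orP[] /(has_nthP 0)[i hi /=];
  rewrite -leqNgt => ui; [exists (VTop i) | exists (VBot i)]; rewrite //= -?t_m -?b_n //.
Qed.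

Lemma stabilisation_exists c : is_config m n c -> exists d, stabilises_to m n c d.
Proof.
move Ew: (sand_weight c) => w; elim/ltn_ind: w c Ew => w IH c Ew cc.
have [sc|/(unstable_exists cc)[v hv uv]] := boolP (stable_config m n c).
  by exists c; split => //; constructor.
have [|d [cd sd]] := IH _ _ _ erefl (topple_config cc hv); first by rewrite -Ew topple_weight.
by exists d; split => //; apply: tr_step cd.
Qed.

Definition add_grains (c : config) (vs : seq vertex) := foldl add_grain c vs.

Lemma add_grains_config vs c : is_config m n c -> all (valid_vertex m n) vs ->
  is_config m n (add_grains c vs).
Proof.
by elim: vs c => //= v vs IH c cc /andP[hv /IH]; apply; apply: add_grain_config.
Qed.

Lemma topple_reach_add_grain a b u : topple_reach m n a b -> is_config m n a ->
  valid_vertex m n u -> topple_reach m n (add_grain a u) (add_grain b u).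
Proof.
elim=> [c|c v d hv uv _ IH] cc hu; first by constructor.
apply: (tr_step (v := v)); rewrite ?topple_add_grain //; first exact: unstable_add_grain.
by apply: IH => //; apply: topple_config.
Qed.

Lemma topple_reach_add_grains vs a b : topple_reach m n a b -> is_config m n a ->
  all (valid_vertex m n) vs -> topple_reach m n (add_grains a vs) (add_grains b vs).
Proof.
elim: vs a b => //= v vs IH a b ab ca /andP[hv hvs].
by apply: IH => //; [apply: topple_reach_add_grain | apply: add_grain_config].
Qed.

Lemma mc_reach_trans a b c : mc_reach m n a b -> mc_reach m n b c -> mc_reach m n a c.
Proof. by elim=> // {}a a' {}b ab _ IH /IH; apply: mr_step. Qed.

(* Each grain can be stabilised as soon as it is added, by confluence. *)
Lemma mc_reach_add_grains vs a s : is_config m n a -> stable_config m n a ->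
  all (valid_vertex m n) vs -> stabilises_to m n (add_grains a vs) s -> mc_reach m n a s.
Proof.
elim: vs a => [|v vs IH] a ca sa /=.
  by move=> _ [/(topple_reach_stable ca sa) ->]; constructor.
case/andP=> hv hvs as_s; have cav := add_grain_config ca hv.
have [a1 [av_a1 sa1]] := stabilisation_exists cav.
apply: (mr_step (c' := a1)); first by exists v.
apply: IH => //; first exact: topple_reach_config av_a1 cav.
split; last exact: as_s.2.
apply: (topple_reach_confluent _ as_s); first exact: add_grains_config.
exact: topple_reach_add_grains.
Qed.

Lemma mc_reach_config a d : mc_reach m n a d -> is_config m n a -> stable_config m n a ->
  is_config m n d /\ stable_config m n d.
Proof.
elim=> // c c' d' [v [hv [cc' sc']]] _ IH cc sc; apply: IH => //.
exact: topple_reach_config cc' (add_grain_config cc hv).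
Qed.

Definition config_le (a e : config) :=
  (forall i, nth 0 a.1 i <= nth 0 e.1 i) /\ (forall j, nth 0 a.2 j <= nth 0 e.2 j).

Definition grains (c : config) := sumn c.1 + sumn c.2.

Lemma grains_add_grain c v : is_config m n c -> valid_vertex m n v ->
  grains (add_grain c v) = (grains c).+1.
Proof.
case: c => t b /is_configP[/= t_m b_n]; rewrite /grains; case: v => i /= hi.
  by have := sumn_set_nthD (nth 0 t i).+1 (_ : i < size t); lia.
by have := sumn_set_nthD (nth 0 b i).+1 (_ : i < size b); lia.
Qed.

Lemma config_le_grains a e : is_config m n a -> is_config m n e -> config_le a e ->
  grains a <= grains e.
Proof.
case: a => t b; case: e => t' b' /is_configP[/= t_m b_n] /is_configP[/= t'_m b'_n] [/= le_t le_b].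
by rewrite leq_add // sumn_le_nth // ?t_m ?b_n.
Qed.

Lemma config_le_add_grain a e : is_config m n a -> is_config m n e -> config_le a e -> a <> e ->
  exists2 v, valid_vertex m n v & config_le (add_grain a v) e.
Proof.
case: a => t b; case: e => t' b' /is_configP[/= t_m b_n] /is_configP[/= t'_m b'_n].
move=> [/= le_t le_b] ne.
have [/hasP[i ii lt_i]|no_t] := boolP (has (fun i => nth 0 t i < nth 0 t' i) (iota 0 m)).
  exists (VTop i); first by move: ii; rewrite mem_iota.
  by split=> k //=; rewrite nth_set_nth /=; case: eqP => [->|].
have [/hasP[j jj lt_j]|no_b] := boolP (has (fun j => nth 0 b j < nth 0 b' j) (iota 0 n)).
  exists (VBot j); first by move: jj; rewrite mem_iota.
  by split=> k //=; rewrite nth_set_nth /=; case: eqP => [->|].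
case: ne; congr (_, _); apply: (@eq_from_nth _ 0); rewrite ?t_m ?t'_m ?b_n ?b'_n // => k hk.
  apply/eqP; rewrite eqn_leq le_t leqNgt; apply: contra no_t => lt_k.
  by apply/hasP; exists k; rewrite // mem_iota.
apply/eqP; rewrite eqn_leq le_b leqNgt; apply: contra no_b => lt_k.
by apply/hasP; exists k; rewrite // mem_iota.
Qed.

Lemma add_grains_of_le a e : is_config m n a -> is_config m n e -> config_le a e ->
  exists2 vs, all (valid_vertex m n) vs & add_grains a vs = e.
Proof.
move Ed: (grains e - grains a) => d; elim/ltn_ind: d a Ed => d IH a Ed ca ce ae.
have [->|/eqP ne] := eqVneq a e; first by exists [::].
have [v hv ave] := config_le_add_grain ca ce ae ne.
have cav := add_grain_config ca hv; have le_ve := config_le_grains cav ce ave.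
rewrite grains_add_grain // in le_ve.
have [|vs hvs <-] := IH (grains e - grains (add_grain a v)) _ _ erefl cav ce ave.
  by rewrite -Ed grains_add_grain //; lia.
by exists (v :: vs); rewrite /= ?hv.
Qed.

Definition max_config : config := (nseq m n.-1, nseq n m).

Lemma max_config_config : is_config m n max_config.
Proof. by apply/is_configP; rewrite !size_nseq. Qed.

Lemma max_config_stable : stable_config m n max_config.
Proof. by rewrite /stable_config !all_nseq prednK ?ltnSn ?leqnn ?orbT. Qed.

Lemma mc_reach_max_config c : is_config m n c -> stable_config m n c ->
  mc_reach m n c max_config.
Proof.
move=> cc sc; have [|vs hvs Evs] := add_grains_of_le cc max_config_config.
  move: cc sc; case: c => t b /is_configP[/= t_m b_n] /andP[/allP t_lt /allP b_lt].
  split=> i /=; rewrite nth_nseq.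
    case: (ltnP i m) => hi; last by rewrite nth_default ?t_m.
    by rewrite -ltnS prednK // t_lt // mem_nth ?t_m.
  case: (ltnP i n) => hi; last by rewrite nth_default ?b_n.
  by rewrite -ltnS b_lt // mem_nth ?b_n.
apply: (mc_reach_add_grains cc sc hvs); rewrite Evs.
by split; [constructor | apply: max_config_stable].
Qed.

(* A forbidden subconfiguration: P top vertices with fewer than Q grains and Q bottom
   vertices with fewer than P grains, none of which can topple inside the subgraph they
   span. *)
Definition forbidden (c : config) := exists P Q, [/\ 0 < P, 0 < Q,
  P <= count (fun x => x < Q) c.1 & Q <= count (fun x => x < P) c.2].

Lemma forbidden_topple c v : is_config m n c -> valid_vertex m n v ->
  unstable_at m n c v -> forbidden (topple m n c v) -> forbidden c.
Proof.
case: c => t b /is_configP[/= t_m b_n]; case: v => i /= hi ui [P [Q [+ Q_gt0]]] /=.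
  case: P => [|P] // _ tP; rewrite count_ltS => bP.
  have P_gt0 : 0 < P by case: P bP {tP} => //; rewrite count_lt0; lia.
  have := count_set_nthD (fun x => x < Q) (nth 0 t i - n) (_ : i < size t).
  have [small|large] := ltnP (nth 0 t i - n) Q => /= count_t; last first.
    exists P.+1, Q; split => //; last by apply: leq_trans bP (count_lt_mono _ _).
    have t_large : (nth 0 t i < Q) = false by apply/negbTE; rewrite -leqNgt; lia.
    by move: count_t; rewrite t_large /=; lia.
  by exists P, Q; split => //; move: count_t; case: (nth 0 t i < Q) => /=; lia.
case: Q Q_gt0 => [|Q] // _ P_gt0; rewrite count_ltS => tQ bQ.
have Q_gt0 : 0 < Q by case: Q tQ {bQ} => //; rewrite count_lt0; lia.
have := count_set_nthD (fun x => x < P) (nth 0 b i - m.+1) (_ : i < size b).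
have [small|large] := ltnP (nth 0 b i - m.+1) P => /= count_b; last first.
  exists P, Q.+1; split => //; first by apply: leq_trans tQ (count_lt_mono _ _).
  have b_large : (nth 0 b i < P) = false by apply/negbTE; rewrite -leqNgt; lia.
  by move: count_b; rewrite b_large /=; lia.
by exists P, Q; split => //; move: count_b; case: (nth 0 b i < P) => /=; lia.
Qed.

Lemma forbidden_add_grain c v : is_config m n c -> valid_vertex m n v ->
  forbidden (add_grain c v) -> forbidden c.
Proof.
case: c => t b /is_configP[/= t_m b_n]; case: v => i /= hi [P [Q [P_gt0 Q_gt0 tP bQ]]].
  have := count_set_nthD (fun x => x < Q) (nth 0 t i).+1 (_ : i < size t).
  by exists P, Q; split=> //; move: tP; case: ltnP; case: ltnP => /=; lia.
have := count_set_nthD (fun x => x < P) (nth 0 b i).+1 (_ : i < size b).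
by exists P, Q; split=> //; move: bQ; case: ltnP; case: ltnP => /=; lia.
Qed.

Lemma topple_reach_forbidden a d : topple_reach m n a d -> is_config m n a ->
  forbidden d -> forbidden a.
Proof.
elim=> // c v d' hv uv _ IH cc /(IH (topple_config cc hv)).
exact: forbidden_topple.
Qed.

Lemma mc_reach_forbidden a d : mc_reach m n a d -> is_config m n a ->
  forbidden d -> forbidden a.
Proof.
elim=> // c c' d' [v [hv [cc' _]]] _ IH cc.
have cv := add_grain_config cc hv.
move/(IH (topple_reach_config cc' cv))/(topple_reach_forbidden cc' cv).
exact: forbidden_add_grain.
Qed.

Lemma max_config_not_forbidden : ~ forbidden max_config.
Proof.
case=> P [Q [P_gt0 Q_gt0]]; rewrite /= !count_nseq.
by case: (ltnP m P); case: (ltnP n.-1 Q) => /=; lia.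
Qed.

Lemma recurrent_not_forbidden c : det_recurrent m n c -> ~ forbidden c.
Proof.
case=> cc [sc back] forb; apply: max_config_not_forbidden.
exact: mc_reach_forbidden (back _ (mc_reach_max_config cc sc)) max_config_config forb.
Qed.

Lemma not_forbidden_separated c : is_config m n c -> sorted_config c -> ~ forbidden c ->
  separated (rcons c.1 n.-1) c.2 0.
Proof.
case: c => t b /is_configP[/= t_m b_n] /andP[st sb] not_forb P Q /=.
rewrite size_rcons t_m ltnS !addn0 => P_bd Q_bd.
rewrite nth_rcons t_m (_ : P.-1 < m); last by case/andP: P_bd; case: P.
case: (leqP Q (nth 0 t P.-1)) => [|lt_t]; first by left.
case: (leqP P (nth 0 b Q.-1)) => [|lt_b]; first by right.
case: not_forb; exists P, Q; split; [by case/andP: P_bd | by case/andP: Q_bd | |] => /=.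
  by apply: sorted_count_lt; rewrite ?t_m.
by apply: sorted_count_lt.
Qed.

(* c after k topplings of the sink, followed by one toppling of each of the last p top
   and the last q bottom vertices.  The hypotheses of [topple_fired_top] and
   [topple_fired_bot] guarantee that no subtraction below truncates. *)
Definition fired (c : config) k p q : config :=
  (mkseq (fun i => nth 0 c.1 i + q - (if m - p <= i then n else 0)) m,
   mkseq (fun j => nth 0 c.2 j + k + p - (if n - q <= j then m.+1 else 0)) n).

Lemma fired_config c k p q : is_config m n (fired c k p q).
Proof. by apply/is_configP; rewrite !size_mkseq. Qed.

Lemma topple_fired_top c k p q : p < m -> n <= nth 0 c.1 (m - p.+1) + q ->
  (forall j, n - q <= j < n -> m.+1 <= nth 0 c.2 j + k + p) ->
  unstable_at m n (fired c k p q) (VTop (m - p.+1)) /\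
  topple m n (fired c k p q) (VTop (m - p.+1)) = fired c k p.+1 q.
Proof.
move=> pm top_ok bot_ok; rewrite /= nth_mkseq ?ifN; try lia.
split; first by rewrite subn0.
rewrite /fired /=.
congr (_, _); last first.
  by rewrite map_mkseq; apply: mkseq_eq_in => j hj /=; have := bot_ok j; case: ifP; lia.
rewrite set_nth_mkseq; last lia.
by apply: mkseq_eq_in => i hi; case: eqP => [->|ne]; repeat case: ifP => ?; lia.
Qed.

Lemma topple_fired_bot c k p q : q < n -> m.+1 <= nth 0 c.2 (n - q.+1) + k + p ->
  (forall i, m - p <= i < m -> n <= nth 0 c.1 i + q) ->
  unstable_at m n (fired c k p q) (VBot (n - q.+1)) /\
  topple m n (fired c k p q) (VBot (n - q.+1)) = fired c k p q.+1.
Proof.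
move=> qn bot_ok top_ok; rewrite /= nth_mkseq ?ifN; try lia.
split; first by rewrite subn0.
rewrite /fired /=.
congr (_, _).
  by rewrite map_mkseq; apply: mkseq_eq_in => i hi /=; have := top_ok i; case: ifP; lia.
rewrite set_nth_mkseq; last lia.
by apply: mkseq_eq_in => j hj; case: eqP => [->|ne]; repeat case: ifP => ?; lia.
Qed.

Lemma fired_reach_bottoms c k q : m < k -> q <= n ->
  topple_reach m n (fired c k 0 0) (fired c k 0 q).
Proof.
move=> mk; elim: q => [|q IH] qn; first by constructor.
apply: topple_reach_trans (IH (ltnW qn)) _.
have bot : m.+1 <= nth 0 c.2 (n - q.+1) + k + 0 by lia.
have no_top : forall i, m - 0 <= i < m -> n <= nth 0 c.1 i + q by move=> i; lia.
have [u <-] := topple_fired_bot qn bot no_top.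
by apply: tr_step u (tr_refl _ _ _) => /=; lia.
Qed.

(* The separation condition says exactly that the burning below never gets stuck. *)
Lemma burning_next c k p q : size c.1 = m -> size c.2 = n ->
  separated (rcons c.1 n.-1) c.2 0 -> 0 < k -> p <= m -> q <= n -> 0 < m - p + (n - q) ->
  (p < m) && (n <= nth 0 c.1 (m - p.+1) + q) \/
  (q < n) && (m.+1 <= nth 0 c.2 (n - q.+1) + k + p).
Proof.
move=> t_m b_n sep k_gt0 pm qn not_done.
have [pm'|pm'] := ltnP p m; last by right; apply/andP; split; lia.
have [qn'|qn'] := ltnP q n; last by left; lia.
have [||t_big|b_big] := sep (m - p) (n - q); rewrite ?size_rcons ?t_m ?b_n; try lia.
  left; move: t_big; rewrite nth_rcons t_m ifT; last lia.
  by rewrite (_ : (m - p).-1 = m - p.+1) /=; lia.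
by right; move: b_big; rewrite (_ : (n - q).-1 = n - q.+1) /=; lia.
Qed.

(* Dhar's burning algorithm: every vertex topples once after the sink. *)
Lemma burning c k : is_config m n c -> separated (rcons c.1 n.-1) c.2 0 -> 0 < k ->
  topple_reach m n (fired c k 0 0) (fired c k m n).
Proof.
move=> /is_configP[t_m b_n] sep k_gt0.
suff: forall d p q, (m - p) + (n - q) = d -> p <= m -> q <= n ->
    (forall i, m - p <= i < m -> n <= nth 0 c.1 i + q) ->
    (forall j, n - q <= j < n -> m.+1 <= nth 0 c.2 j + k + p) ->
    topple_reach m n (fired c k p q) (fired c k m n).
  by move/(_ _ 0 0 erefl); apply=> // [i|j]; lia.
elim=> [|d IH] p q Ed pm qn top_ok bot_ok.
  have [-> ->] : p = m /\ q = n by lia.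
  exact: tr_refl.
have [|/andP[pm' top]|/andP[qn' bot]] := burning_next t_m b_n sep k_gt0 pm qn; first lia.
  have [u fire] := topple_fired_top pm' top bot_ok.
  apply: tr_step u _; rewrite ?fire /=; first lia.
  apply: IH => [||| i hi | j hj]; [lia | lia | lia | | ].
  - by case: (eqVneq i (m - p.+1)) => [->|ne] //; apply: top_ok; lia.
  - by have := bot_ok j hj; lia.
have [u fire] := topple_fired_bot qn' bot top_ok.
apply: tr_step u _; rewrite ?fire /=; first lia.
apply: IH => [||| i hi | j hj]; [lia | lia | lia | | ].
- by have := top_ok i hi; lia.
- by case: (eqVneq j (n - q.+1)) => [->|ne]; [lia | have := bot_ok j; lia].
Qed.

Lemma fired_full c k : is_config m n c -> fired c k.+1 m n = fired c k 0 0.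
Proof.
case: c => t b /is_configP[/= t_m b_n]; rewrite /fired /=.
by congr (_, _); apply: mkseq_eq_in => i hi; repeat case: ifP => ?; lia.
Qed.

Lemma fired0 c : is_config m n c -> fired c 0 0 0 = c.
Proof.
case: c => t b /is_configP[/= t_m b_n]; rewrite /fired /=; congr (_, _).
  by rewrite -[RHS](mkseq_nth 0 t) t_m; apply: mkseq_eq_in => i hi; rewrite ifN; lia.
by rewrite -[RHS](mkseq_nth 0 b) b_n; apply: mkseq_eq_in => i hi; rewrite ifN; lia.
Qed.

Lemma fired_reach c k : is_config m n c -> separated (rcons c.1 n.-1) c.2 0 ->
  topple_reach m n (fired c k 0 0) c.
Proof.
move=> cc sep; elim: k => [|k IH]; first by rewrite fired0 //; constructor.
rewrite -fired_full // in IH; apply: topple_reach_trans IH.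
exact: burning.
Qed.

Lemma separated_recurrent c : is_config m n c -> stable_config m n c ->
  separated (rcons c.1 n.-1) c.2 0 -> det_recurrent m n c.
Proof.
move=> cc sc sep; set e := fired c m.*2.+1 0 n.
have e_c : stabilises_to m n e c.
  split=> //; apply: (topple_reach_confluent (fired_config _ _ _ _)).
    by split; [apply: fired_reach | ].
  by apply: fired_reach_bottoms; lia.
have max_e : config_le max_config e.
  split=> i; rewrite /= nth_nseq; case: ltnP => hi //.
    by rewrite nth_mkseq // ifN; lia.
  by rewrite nth_mkseq // subnn leq0n -mul2n; lia.
have [vs hvs Evs] := add_grains_of_le max_config_config (fired_config _ _ _ _) max_e.
have max_c : mc_reach m n max_config c.
  by apply: (mc_reach_add_grains max_config_config max_config_stable hvs); rewrite Evs.
split; [done | split => // d cd].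
have [dc ds] := mc_reach_config cd cc sc.
exact: mc_reach_trans (mc_reach_max_config dc ds) max_c.
Qed.

Lemma sorted_recurrent_separated c : sorted_recurrent m n c ->
  separated (rcons c.1 n.-1) c.2 0.
Proof.
case=> sc rc; apply: not_forbidden_separated rc.1 sc _.
exact: recurrent_not_forbidden rc.
Qed.

End Sandpile.

(** * The stack algorithm *)

Lemma upper_path_mapS cur hs : upper_path cur.+1 (map S hs) = upper_path cur hs.
Proof. by elim: hs cur => //= h hs IH cur; rewrite subSS IH. Qed.

Lemma upper_path0_mapS s : s != [::] -> upper_path 0 (map S s) = N :: upper_path 0 s.
Proof. by case: s => // h s _ /=; rewrite !subn0 upper_path_mapS. Qed.

Lemma lower_path_mapS xe cur xs : lower_path xe.+1 cur.+1 (map S xs) = lower_path xe cur xs.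
Proof. by elim: xs cur => [|x xs IH] cur /=; rewrite subSS // IH. Qed.

Lemma lower_path0_mapS xe s : lower_path xe.+1 0 (map S s) = E :: lower_path xe 0 s.
Proof. by case: s => [|h s] /=; rewrite !subn0 // lower_path_mapS. Qed.

(* The letters Xi reads off the two boundary paths whose E steps (upper path) and
   N steps (lower path) occur at heights T, resp. x-coordinates B. *)
Definition stack_word (T B : seq nat) : seq mstep :=
  map xi_letter (zip (upper_path 0 T) (lower_path (last 0 B) 0 B)).

Lemma stack_wordU T B : T != [::] -> B != [::] ->
  stack_word (map S T) (map S B) = U :: stack_word T B.
Proof. by move=> nT nB; rewrite /stack_word last_mapS // upper_path0_mapS // lower_path0_mapS. Qed.

Lemma stack_wordHE T B : B != [::] -> stack_word (0 :: T) (map S B) = HE :: stack_word T B.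
Proof. by move=> nB; rewrite /stack_word last_mapS // lower_path0_mapS. Qed.

Lemma stack_wordHN T B : T != [::] -> stack_word (map S T) (0 :: B) = HN :: stack_word T B.
Proof. by move=> nT; rewrite /stack_word last0_cons0 upper_path0_mapS. Qed.

Lemma stack_wordD T B : stack_word (0 :: T) (0 :: B) = D :: stack_word T B.
Proof. by rewrite /stack_word last0_cons0. Qed.

Lemma stack_word_nilT B : stack_word [::] B = [::].
Proof. by rewrite /stack_word; case: (lower_path _ _ _). Qed.

Lemma stack_word_nilB T : stack_word T [::] = [::].
Proof. by rewrite /stack_word; case: (upper_path 0 T). Qed.

Lemma stack_word_addn j T B : T != [::] -> B != [::] ->
  stack_word (map (addn j) T) (map (addn j) B) = nseq j U ++ stack_word T B.
Proof.
move=> nT nB; elim: j => [|j IH]; first by rewrite !(eq_map add0n) !map_id.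
have shiftS s : map (addn j.+1) s = map S (map (addn j) s).
  by rewrite -map_comp; apply: eq_map => x /=; rewrite addSn.
by rewrite !shiftS stack_wordU ?IH // -size_eq0 size_map size_eq0.
Qed.

Lemma loop_aE k T B w : head 0 T < k ->
  let j := minn (head 0 T) (head 0 B) in
  loop_a k T B w = (map (subn^~ j) T, map (subn^~ j) B, w ++ nseq j U).
Proof.
have sub0 (s : seq nat) : map (subn^~ 0) s = s by rewrite (eq_map subn0) map_id.
elim: k T B w => // k IH [|t T] [|b B] w hk /=; rewrite ?min0n ?minn0 ?subn0 ?sub0 ?cats0 //.
case: t hk => [|t] /= hk; case: b => [|b] /=; rewrite ?min0n ?minn0 ?subn0 ?sub0 ?cats0 //.
rewrite IH /= ?minnSS ?subSS -?map_comp ?cat_rcons; last lia.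
by congr (_ :: _, _ :: _, _); apply: eq_map => x /=; lia.
Qed.

Lemma step_bE T B w : sorted leq T -> sorted leq B -> T != [::] -> B != [::] ->
  (head 0 T == 0) || (head 0 B == 0) ->
  exists s T' B', [/\ step_b T B w = (T', B', rcons w s),
    stack_word T B = s :: stack_word T' B', sorted leq T', sorted leq B' &
    size T' + size B' < size T + size B].
Proof.
case: T => // -[|t] T; case: B => // -[|b] B sT sB _ _ //= _.
- exists D, T, B; split; rewrite ?stack_wordD //=; last lia.
    exact: path_sorted sT.
  exact: path_sorted sB.
- exists HE, T, (b :: map predn B); split=> //; last by rewrite /= size_map; lia.
  + by rewrite -[in LHS](map_S_pred sB) // stack_wordHE.
  + exact: path_sorted sT.
  + by rewrite -[(b :: _)]/(map predn (b.+1 :: B)) sorted_map_pred.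
- exists HN, (t :: map predn T), B; split=> //; last by rewrite /= size_map; lia.
  + by rewrite -[in LHS](map_S_pred sT) // stack_wordHN.
  + by rewrite -[(t :: _)]/(map predn (t.+1 :: T)) sorted_map_pred.
  + exact: path_sorted sB.
Qed.

Lemma outer_loopE f T B w : sorted leq T -> sorted leq B -> size T + size B < f ->
  outer_loop f T B w = w ++ stack_word T B.
Proof.
elim: f T B w => // f IH T B w sT sB Tf; cbn [outer_loop].
have [->|nT] := eqVneq T [::]; first by rewrite stack_word_nilT cats0.
have [->|nB] := eqVneq B [::]; first by rewrite andbF stack_word_nilB cats0.
have hT : head 0 T < (sumn T).+1 by case: (T) => //= x s; rewrite ltnS leq_addr.
rewrite loop_aE //=; set j := minn _ _.
have [|||s [T' [B' [-> sw_j sT' sB' size_dec]]]] :=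
  step_bE (w ++ nseq j U) (sorted_map_subn j sT) (sorted_map_subn j sB).
- by rewrite -size_eq0 size_map size_eq0.
- by rewrite -size_eq0 size_map size_eq0.
- rewrite /j; case: (T) nT => // t T0; case: (B) nB => // b B0 _ _ /=.
  by apply/orP; case: (leqP t b) => tb; [left | right]; apply/eqP; lia.
rewrite IH //; last by move: size_dec; rewrite !size_map; lia.
rewrite -(map_addn_subn sT (geq_minl _ _ : j <= _)).
rewrite -(map_addn_subn sB (geq_minr _ _ : j <= _)).
rewrite stack_word_addn ?sw_j -?cats1 -?catA //.
- by rewrite -size_eq0 size_map size_eq0.
- by rewrite -size_eq0 size_map size_eq0.
Qed.

Lemma run_algorithmE n c : sorted leq (rcons c.1 n.-1) -> sorted leq c.2 ->
  run_algorithm n c = stack_word (rcons c.1 n.-1) c.2.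
Proof. by move=> sT sB; rewrite /run_algorithm outer_loopE. Qed.

(** * Reading the stacks off a word *)

Definition is_step (a s : mstep) : bool :=
  match a, s with U, U | D, D | HN, HN | HE, HE => true | _, _ => false end.

Lemma count_UorHE p : count is_UorHE p = count (is_step U) p + count (is_step HE) p.
Proof. by elim: p => //= s p ->; case: s => /=; lia. Qed.

Lemma size_count_steps p :
  size p = count (is_step U) p + count (is_step D) p + count (is_step HN) p + count (is_step HE) p.
Proof. by elim: p => //= s p ->; case: s => /=; lia. Qed.

Lemma motz_ok_count h p : motz_ok h p -> h + count (is_step U) p = count (is_step D) p.
Proof.
elim: p h => [|s p IH] h /=; first by move/eqP->.
by case: s => /=; [move/IH | case/andP=> h_gt0 /IH | move/IH | move/IH]; lia.
Qed.

Definition push (s : mstep) (TB : seq nat * seq nat) : seq nat * seq nat :=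
  let: (T, B) := TB in
  match s with
  | U => (map S T, map S B)
  | HE => (0 :: T, map S B)
  | HN => (map S T, 0 :: B)
  | D => (0 :: T, 0 :: B)
  end.

(* The stacks (T, B) from which the algorithm produces the word [rcons p D]. *)
Definition stacks (p : seq mstep) : seq nat * seq nat := foldr push ([:: 0], [:: 0]) p.

Lemma stacks_size p :
  size (stacks p).1 = count (is_step HE) p + count (is_step D) p + 1 /\
  size (stacks p).2 = count (is_step HN) p + count (is_step D) p + 1.
Proof.
elim: p => //= s p; case: (stacks p) => T B /= [hT hB].
by case: s; rewrite /= ?size_map; lia.
Qed.

Lemma stacks_neq_nil p : (stacks p).1 != [::] /\ (stacks p).2 != [::].
Proof. by case: (stacks_size p) => hT hB; rewrite -!size_eq0 hT hB !addn1. Qed.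

Lemma stacks_last p :
  last 0 (stacks p).1 = count (is_step U) p + count (is_step HN) p /\
  last 0 (stacks p).2 = count (is_step U) p + count (is_step HE) p.
Proof.
elim: p => //= s p; have := stacks_neq_nil p.
case: (stacks p) => T B /= [nT nB] [lT lB].
by case: s; rewrite /= ?last_mapS ?last0_cons0 ?lT ?lB //; lia.
Qed.

Lemma stacks_sorted p : sorted leq (stacks p).1 /\ sorted leq (stacks p).2.
Proof.
elim: p => //= s p; case: (stacks p) => T B /= [sT sB].
by case: s; rewrite /= ?sorted_map ?sorted_path0 //; split; apply: sorted_path0.
Qed.

Lemma stack_word_stacks p : stack_word (stacks p).1 (stacks p).2 = rcons p D.
Proof.
elim: p => [|s p]; first by rewrite /= stack_wordD stack_word_nilT.
have := stacks_neq_nil p; rewrite /=; case: (stacks p) => T B /= [nT nB] IH.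
by case: s; rewrite ?stack_wordU ?stack_wordHE ?stack_wordHN ?stack_wordD ?IH.
Qed.

Lemma separatedU T B h : separated (map S T) (map S B) h <-> separated T B h.+1.
Proof.
rewrite /separated !size_map; split=> sep P Q hP hQ; have := sep P Q hP hQ;
  rewrite !nth_mapS; case: ifP; case: ifP; lia.
Qed.

Lemma separatedHE T B h : separated (0 :: T) (map S B) h <-> separated T B h.
Proof.
rewrite /separated /= size_map; split=> sep [|P] Q // PT QB.
  by have /= := sep P.+2 Q; rewrite nth_mapS; case: ifP; lia.
case: P PT => [|P] PT; first by right; rewrite nth_mapS; case: ifP; lia.
by have /= := sep P.+1 Q; rewrite nth_mapS; case: ifP; lia.
Qed.

Lemma separatedHN T B h : separated (map S T) (0 :: B) h <-> separated T B h.
Proof.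
rewrite /separated /= size_map; split=> sep P [|Q] // PT QB.
  by have /= := sep P Q.+2; rewrite nth_mapS; case: ifP; lia.
case: Q QB => [|Q] QB; first by left; rewrite nth_mapS; case: ifP; lia.
by have /= := sep P Q.+1; rewrite nth_mapS; case: ifP; lia.
Qed.

Lemma separatedD T B h : separated (0 :: T) (0 :: B) h.+1 <-> separated T B h.
Proof.
rewrite /separated /=; split=> sep [|P] [|Q] // PT QB.
  by have /= := sep P.+2 Q.+2; lia.
case: P PT => [|P] PT; first by right; lia.
case: Q QB => [|Q] QB; first by left; lia.
by have /= := sep P.+1 Q.+1; lia.
Qed.

Lemma separatedD0 T B : T != [::] -> ~ separated (0 :: T) (0 :: B) 0.
Proof. by case: T => // t T _ /(_ 1 1 isT isT) []. Qed.

Lemma stacks_separated p h : h + count (is_step U) p = count (is_step D) p ->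
  motz_ok h p <-> separated (stacks p).1 (stacks p).2 h.
Proof.
elim: p h => [|s p IH] h /=.
  by rewrite addn0 => ->; split=> // _ [|[|P]] //=; lia.
have [nT _] := stacks_neq_nil p; move: IH nT; case: (stacks p) => T B /= IH nT.
case: s => /= count_h.
- by rewrite IH ?separatedU //; lia.
- case: h count_h => [|h] count_h /=; last by rewrite separatedD IH //; lia.
  by split=> // /(separatedD0 nT).
- by rewrite IH ?separatedHN //; lia.
- by rewrite IH ?separatedHE //; lia.
Qed.

Lemma stacks_area p h : motz_ok h p ->
  area2 h p + h * h + 2 * size (stacks p).1 * size (stacks p).2 =
  2 * (sumn (stacks p).1 + sumn (stacks p).2) +
  2 * (size (stacks p).1 + size (stacks p).2) * h + 2.
Proof.
elim: p h => [|s p IH] h /=; first by move/eqP->.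
move: IH; case: (stacks p) => T B /= IH.
case: s => /=; rewrite ?size_map ?sumn_mapS.
- by move/IH; nia.
- by case/andP=> h_gt0 /IH; case: h h_gt0 => // h _ /=; nia.
- by move/IH; nia.
- by move/IH; nia.
Qed.

Definition balanced (T B : seq nat) := [/\ T != [::], B != [::], sorted leq T,
  sorted leq B & last 0 T + size T = last 0 B + size B].

Definition stack_weight (TB : seq nat * seq nat) :=
  sumn TB.1 + sumn TB.2 + size TB.1 + size TB.2.

Lemma balanced_pop T B : balanced T B -> T = [:: 0] /\ B = [:: 0] \/
  exists s T0 B0, [/\ balanced T0 B0, push s (T0, B0) = (T, B) &
    stack_weight (T0, B0) < stack_weight (T, B)].
Proof.
case=> + + sT sB bal; case: T sT bal => [|t T] // sT; case: B sB => [|b B] // sB bal _ _.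
have sT' := path_sorted sT; have sB' := path_sorted sB.
case: t sT bal => [|t] sT bal; case: b sB bal => [|b] sB bal.
- case: T sT sT' bal => [|t' T] sT sT' bal; case: B sB sB' bal => [|b' B] sB sB' //= bal; try lia.
    by left.
  right; exists D, (t' :: T), (b' :: B); split=> //.
    by split=> //; move: bal => /=; lia.
  by rewrite /stack_weight /=; lia.
- have EB := map_S_pred sB isT; set B0 := map predn _ in EB.
  case: T sT sT' bal => [|t' T] sT sT' bal.
    by move: bal; rewrite -EB last_mapS //= size_map; lia.
  right; exists HE, (t' :: T), B0; split; [split | by rewrite /push EB |] => //.
    by rewrite sorted_map_pred.
    by move: bal; rewrite -EB last_mapS //= size_map; lia.
  by rewrite -EB /stack_weight /= sumn_mapS size_map; lia.
- have ET := map_S_pred sT isT; set T0 := map predn _ in ET.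
  case: B sB sB' bal => [|b' B] sB sB' bal.
    by move: bal; rewrite -ET last_mapS //= size_map; lia.
  right; exists HN, T0, (b' :: B); split; [split | by rewrite /push ET |] => //.
    by rewrite sorted_map_pred.
    by move: bal; rewrite -ET last_mapS //= size_map; lia.
  by rewrite -ET /stack_weight /= sumn_mapS size_map; lia.
- have ET := map_S_pred sT isT; set T0 := map predn _ in ET.
  have EB := map_S_pred sB isT; set B0 := map predn _ in EB.
  right; exists U, T0, B0; split; [split | by rewrite /push ET EB |] => //.
    by rewrite sorted_map_pred.
    by rewrite sorted_map_pred.
    by move: bal; rewrite -ET -EB !last_mapS //= !size_map; lia.
  by rewrite -ET -EB /stack_weight /= !sumn_mapS !size_map; lia.
Qed.

Lemma balanced_stacks T B : balanced T B -> exists p, stacks p = (T, B).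
Proof.
move Ew: (stack_weight (T, B)) => w; elim/ltn_ind: w T B Ew => w IH T B Ew.
case/balanced_pop => [[-> ->]|[s [T0 [B0 [bal0 E lt_w]]]]]; first by exists [::].
have [|p Ep] := IH (stack_weight (T0, B0)) _ T0 B0 erefl bal0; first by rewrite -Ew.
by exists (s :: p); rewrite -E /stacks /= -/(stacks p) Ep.
Qed.

Lemma size_upper_path cur hs : path leq cur hs ->
  size (upper_path cur hs) = last cur hs - cur + size hs.
Proof.
elim: hs cur => [|h hs IH] cur /=; first lia.
case/andP=> ch hhs; rewrite size_cat size_nseq /= IH //; case/andP: (path_le_last hhs); lia.
Qed.

Lemma size_lower_path xe cur xs : path leq cur xs -> last cur xs <= xe ->
  size (lower_path xe cur xs) = xe - cur + size xs.
Proof.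
elim: xs cur => [|x xs IH] cur /=; first by rewrite size_nseq; lia.
case/andP=> cx xxs xs_xe; rewrite size_cat size_nseq /= IH //; case/andP: (path_le_last xxs); lia.
Qed.

Lemma Xi_Phi_stack_word m n c : 0 < n -> size c.1 = m -> size c.2 = n -> last 0 c.2 = m ->
  sorted leq (rcons c.1 n.-1) -> sorted leq c.2 ->
  Xi (Phi m n c) = take (m + n).-1 (stack_word (rcons c.1 n.-1) c.2).
Proof.
move=> n_gt0 t_m b_n b_last sT sB.
have upper : upper_of n c.1 = N :: upper_path 0 (rcons c.1 n.-1).
  by rewrite /upper_of -upper_path0_mapS -?size_eq0 ?size_rcons // map_rcons cats1 prednK.
have lower : lower_of m c.2 = E :: lower_path m 0 c.2 by rewrite /lower_of lower_path0_mapS.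
have size_u : size (upper_path 0 (rcons c.1 n.-1)) = m + n.
  by rewrite size_upper_path ?sorted_path0 // last_rcons size_rcons t_m; lia.
have size_l : size (lower_path m 0 c.2) = m + n.
  by rewrite size_lower_path ?sorted_path0 ?b_last // b_n; lia.
rewrite /Xi /Phi /= upper lower /inner_steps /= size_u size_l /stack_word b_last.
by rewrite -map_take take_zip.
Qed.

(** * The bijection *)

Section Bijection.
Variables m n : nat.
Hypothesis n_gt0 : 0 < n.

Lemma sorted_recurrent_shape c : sorted_recurrent m n c ->
  [/\ size c.1 = m, size c.2 = n, last 0 c.2 = m,
      sorted leq (rcons c.1 n.-1) & sorted leq c.2].
Proof.
move=> rc; have sep := sorted_recurrent_separated n_gt0 rc.
case: rc => /andP[st sb] [/is_configP[t_m b_n] [/andP[/allP t_lt /allP b_lt] _]].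
have b_last : last 0 c.2 = m.
  have b_last_lt : last 0 c.2 < m.+1.
    by apply: b_lt; rewrite -nth_last mem_nth // b_n prednK.
  case: m t_m b_last_lt sep t_lt => [|m'] t_m b_last_lt sep t_lt; first lia.
  have [] := sep m'.+1 n; rewrite ?size_rcons ?t_m ?b_n //= ?addn0; try lia.
    rewrite nth_rcons t_m ltnSn => t_big.
    by have := t_lt (nth 0 c.1 m'); rewrite mem_nth ?t_m //; lia.
  by rewrite -b_n nth_last; lia.
split=> //; apply: sorted_rcons_le => //; apply/allP=> x /t_lt; lia.
Qed.

Lemma w_of_stacks c p : sorted leq (rcons c.1 n.-1) -> sorted leq c.2 ->
  stacks p = (rcons c.1 n.-1, c.2) -> w_of n c = p.
Proof.
move=> sT sB Ep; rewrite /w_of run_algorithmE //.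
have -> : stack_word (rcons c.1 n.-1) c.2 = rcons p D by rewrite -stack_word_stacks Ep.
by rewrite size_rcons -cats1 take_size_cat.
Qed.

Lemma stacks_w_of c : sorted_recurrent m n c -> stacks (w_of n c) = (rcons c.1 n.-1, c.2).
Proof.
case/sorted_recurrent_shape=> t_m b_n b_last sT sB.
have [|p Ep] := @balanced_stacks (rcons c.1 n.-1) c.2.
  split=> //; rewrite -?size_eq0 ?size_rcons ?b_n ?last_rcons ?b_last; lia.
by rewrite (w_of_stacks sT sB Ep).
Qed.

Lemma w_of_counts c : sorted_recurrent m n c ->
  let p := w_of n c in
  [/\ count (is_step U) p = count (is_step D) p,
      count (is_step HE) p + count (is_step D) p = m,
      count (is_step HN) p + count (is_step D) p = n.-1 &
      count (is_step U) p + count (is_step HE) p = m].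
Proof.
move=> rc p; have [t_m b_n b_last _ _] := sorted_recurrent_shape rc.
have [] := stacks_size p; have [] := stacks_last p.
rewrite /p stacks_w_of //= last_rcons size_rcons b_last t_m b_n.
by move=> *; split; lia.
Qed.

Lemma w_of_motz c : sorted_recurrent m n c -> motz_ok 0 (w_of n c).
Proof.
move=> rc; have [UD _ _ _] := w_of_counts rc.
apply/(stacks_separated (h := 0)) => //; rewrite stacks_w_of //.
exact: (@sorted_recurrent_separated _ _ n_gt0 _ rc).
Qed.

Lemma w_of_in_Motz c : sorted_recurrent m n c -> in_Motz m n (w_of n c).
Proof.
move=> rc; have [UD HED HND UHE] := w_of_counts rc.
rewrite /in_Motz size_count_steps count_UorHE w_of_motz // UHE eqxx andbT.
by apply/eqP; lia.
Qed.

Lemma w_of_Xi_Phi c : sorted_recurrent m n c -> w_of n c = Xi (Phi m n c).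
Proof.
move=> rc; have [t_m b_n b_last sT sB] := sorted_recurrent_shape rc.
have /and3P[/eqP size_w _ _] := w_of_in_Motz rc.
rewrite Xi_Phi_stack_word //; have -> : stack_word (rcons c.1 n.-1) c.2 = rcons (w_of n c) D.
  by rewrite -stack_word_stacks stacks_w_of.
by rewrite -cats1 takel_cat ?take_oversize ?size_w //; lia.
Qed.

Lemma level_Area c : sorted_recurrent m n c -> ((level m n c)%:~R : rat) = Area (w_of n c).
Proof.
move=> rc; have [t_m b_n _ _ _] := sorted_recurrent_shape rc.
have := stacks_area (w_of_motz rc); rewrite stacks_w_of //= size_rcons sumn_rcons t_m b_n.
rewrite /level /Area => area; have -> : area2 0 (w_of n c) = (sumn c.1 + sumn c.2 - m * n) * 2.
  by nia.
rewrite natrM mulfK ?pnatr_eq0 // natrB; last by nia.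
by rewrite intrB.
Qed.

Lemma w_of_inj c1 c2 : sorted_recurrent m n c1 -> sorted_recurrent m n c2 ->
  w_of n c1 = w_of n c2 -> c1 = c2.
Proof.
move=> rc1 rc2 w12; have := stacks_w_of rc1; rewrite w12 stacks_w_of //.
by case: c1 c2 {rc1 rc2 w12} => [t1 b1] [t2 b2] [/rcons_inj[->] ->].
Qed.

Lemma w_of_surj p : in_Motz m n p -> exists2 c, sorted_recurrent m n c & w_of n c = p.
Proof.
case/and3P=> /eqP size_p /eqP count_p motz_p.
have UD := motz_ok_count motz_p; rewrite count_UorHE in count_p.
have sep := (stacks_separated UD).1 motz_p; have size_p' := size_count_steps p.
have [nT _] := stacks_neq_nil p; have [sT sB] := stacks_sorted p.
have [sizeT sizeB] := stacks_size p; have [lT lB] := stacks_last p.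
case Ep: (stacks p) => [[|t T] B] in nT sT sB sizeT sizeB lT lB sep *; first by [].
rewrite /= in sT sB sizeT sizeB lT lB sep.
have T_last : last t T = n.-1 by lia.
have ET : t :: T = rcons (belast t T) n.-1 by rewrite lastI T_last.
have sT' : sorted leq (rcons (belast t T) n.-1) by rewrite -ET.
rewrite ET in sep; exists (belast t T, B); last first.
  by apply: w_of_stacks => //=; rewrite Ep ET.
split; first by rewrite /sorted_config /= sB (subseq_sorted leq_trans (subseq_rcons _ _) sT').
apply: separated_recurrent => //.
- by apply/is_configP; rewrite /= size_belast; lia.
- apply/andP; split; apply/allP=> x.
    by move/mem_belast/(allP (path_le_last sT)); lia.
  by move/(allP (sorted_le_last sB)); lia.
Qed.

End Bijection.

Theorem theorem4p16 (m n : nat) (hn : 0 < n) :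
  (forall c : config, sorted_recurrent m n c ->
     w_of n c = Xi (Phi m n c) /\
     ((level m n c)%:~R : rat) = Area (w_of n c)) /\
  (* c |-> w(c) is a bijection onto Motz_{m,n-1} *)
  (forall c : config, sorted_recurrent m n c -> in_Motz m n (w_of n c)) /\
  (forall c1 c2 : config, sorted_recurrent m n c1 -> sorted_recurrent m n c2 ->
     w_of n c1 = w_of n c2 -> c1 = c2) /\
  (forall p : seq mstep, in_Motz m n p ->
     exists c : config, sorted_recurrent m n c /\ w_of n c = p).
Proof.
split; first by move=> c rc; split; [apply: w_of_Xi_Phi | apply: level_Area].
split; first by move=> c; apply: w_of_in_Motz.
split; first exact: w_of_inj.
by move=> p /(w_of_surj hn) [c rc wc]; exists c.
Qed.
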